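(* Let $n\leq 5$ be a positive integer, let $X_1,\ldots,X_n$ be independent Bernoulli random variables, $S=\sum_{i=1}^n X_i$, and let $Z$ be a Poisson random variable with mean $1$, independent of $S$. Assume that $S+Z$ has a unique mode $m_1$, and let $m_0$ be any mode of $S$. Then $m_1\leq m_0+1$.
   Context: A mode of a random variable $X$ taking values in $\{0,1,2,\ldots\}$ is any integer $m$ at which $k\mapsto\Pr(X=k)$ attains its maximum. The Bernoulli variables may have arbitrary (possibly different) success probabilities. *)

From Stdlib Require Import Reals Arith Factorial.
Open Scope R_scope.

(* Law of S = X_1 + ... + X_n for independent Bernoulli variables X_i with
   success probabilities p 0, ..., p (n-1): the pmf k |-> Pr(S = k),
   obtained by iterated convolution (adding one independent Bernoulli at a time). *)
Fixpoint bern_sum_pmf (p : nat -> R) (n : nat) (k : nat) : R :=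
  match n with
  | O => match k with O => 1 | S _ => 0 end
  | S n' => (1 - p n') * bern_sum_pmf p n' k
            + match k with O => 0 | S k' => p n' * bern_sum_pmf p n' k' end
  end.

Definition poisson1_pmf (j : nat) : R := exp (-1) / INR (fact j).

Definition bern_sum_poisson_pmf (p : nat -> R) (n : nat) (k : nat) : R :=
  sum_f_R0 (fun j => bern_sum_pmf p n j * poisson1_pmf (k - j)) k.

Definition is_mode (f : nat -> R) (m : nat) : Prop :=
  forall k : nat, f k <= f m.

Definition is_unique_mode (f : nat -> R) (m : nat) : Prop :=
  is_mode f m /\ forall m' : nat, is_mode f m' -> m' = m.

From Stdlib Require Import Reals Factorial Lra Lia Psatz.
Open Scope R_scope.

(* Write b k = Pr(S = k).  The argument has three ingredients.
   1. Strengthened Newton inequality: for n <= 5,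
        2 b(k) b(k+2) <= b(k+1)^2   for every k.
      For the first index this holds for every n, by induction on n; the
      middle index of five trials is a sum-of-squares identity; the remaining
      indices follow from the symmetry k <-> n - k (replace p by 1 - p), and
      fewer than five trials are padded with trials of probability 0.
   2. Since b is nonnegative, log-concave and has no internal zeros, it is
      nonincreasing after its mode m0, and the Newton inequality then gives
      2 b(k+2) <= b(k) for all k >= m0.
   3. Convolving with Poisson(1), whose pmf satisfies pi(1) = pi(0),
      pi(2) = pi(0)/2 and decreases, turns that halving property into
      Pr(S+Z = k+2) <= Pr(S+Z = k+1) for k >= m0, so Pr(S+Z = .) is
      nonincreasing from m0 + 1 on and a unique mode cannot exceed m0 + 1. *)

Lemma bern_sum_pmf_S (p : nat -> R) (n k : nat) :
  bern_sum_pmf p (S n) (S k)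
  = (1 - p n) * bern_sum_pmf p n (S k) + p n * bern_sum_pmf p n k.
Proof. reflexivity. Qed.

Lemma bern_sum_pmf_large (p : nat -> R) (n k : nat) :
  (n < k)%nat -> bern_sum_pmf p n k = 0.
Proof.
  revert k; induction n as [|n IH]; intros k Hk.
  - destruct k; [lia | reflexivity].
  - destruct k as [|k]; [lia |].
    rewrite bern_sum_pmf_S, !IH by lia; ring.
Qed.

Lemma bern_sum_pmf_nonneg (p : nat -> R) (n : nat) :
  (forall i : nat, (i < n)%nat -> 0 <= p i <= 1) ->
  forall k : nat, 0 <= bern_sum_pmf p n k.
Proof.
  induction n as [|n IH]; intros Hp k.
  - destruct k; simpl; lra.
  - assert (Hpn := Hp n (Nat.lt_succ_diag_r n)).
    assert (Hb : forall j, 0 <= bern_sum_pmf p n j)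
      by (apply IH; intros; apply Hp; lia).
    destruct k as [|k]; cbn [bern_sum_pmf].
    + specialize (Hb 0%nat); nra.
    + pose proof (Hb k); pose proof (Hb (S k)); nra.
Qed.

Lemma bern_sum_pmf_compl (p : nat -> R) (n k : nat) :
  (k <= n)%nat ->
  bern_sum_pmf (fun i => 1 - p i) n k = bern_sum_pmf p n (n - k).
Proof.
  revert k; induction n as [|n IH]; intros k Hk.
  - replace k with 0%nat by lia; reflexivity.
  - destruct k as [|k].
    + rewrite Nat.sub_0_r, bern_sum_pmf_S; cbn [bern_sum_pmf].
      rewrite IH, Nat.sub_0_r, (bern_sum_pmf_large p n (S n)) by lia; ring.
    + rewrite bern_sum_pmf_S.
      destruct (Nat.eq_dec k n) as [-> | Hkn].
      * rewrite (bern_sum_pmf_large _ n (S n)), IH by lia.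
        rewrite !Nat.sub_diag; cbn [bern_sum_pmf]; ring.
      * rewrite !IH by lia.
        replace (S n - S k)%nat with (S (n - S k)) by lia.
        replace (n - k)%nat with (S (n - S k)) by lia.
        rewrite bern_sum_pmf_S; ring.
Qed.

Definition pad (p : nat -> R) (n : nat) (i : nat) : R :=
  if (i <? n)%nat then p i else 0.

Lemma bern_sum_pmf_pad (p : nat -> R) (n m k : nat) :
  (n <= m)%nat -> bern_sum_pmf (pad p n) m k = bern_sum_pmf p n k.
Proof.
  assert (Hlow : forall j k, (j <= n)%nat ->
            bern_sum_pmf (pad p n) j k = bern_sum_pmf p j k).
  { induction j as [|j IH]; intros k' Hj; [reflexivity |].
    assert (E : pad p n j = p j)
      by (unfold pad; rewrite (proj2 (Nat.ltb_lt j n)) by lia; reflexivity).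
    destruct k'; cbn [bern_sum_pmf]; rewrite E, ?IH by lia; reflexivity. }
  intros Hnm; revert k; induction m as [|m IH]; intros k.
  - assert (n = 0%nat) as -> by lia; apply Hlow; lia.
  - destruct (Nat.eq_dec n (S m)) as [<- | Hne]; [apply Hlow; lia |].
    assert (E : pad p n m = 0)
      by (unfold pad; rewrite (proj2 (Nat.ltb_ge m n)) by lia; reflexivity).
    destruct k; cbn [bern_sum_pmf]; rewrite E, ?IH by lia; ring.
Qed.

Definition no_internal_zeros (b : nat -> R) : Prop :=
  forall a k c : nat, (a < k < c)%nat -> 0 < b a -> 0 < b c -> 0 < b k.

Lemma bern_sum_pmf_S_pos (p : nat -> R) (n k : nat) :
  (forall i : nat, (i <= n)%nat -> 0 <= p i <= 1) ->
  0 < bern_sum_pmf p (S n) k ->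
  (p n < 1 /\ 0 < bern_sum_pmf p n k)
  \/ (0 < p n /\ (1 <= k)%nat /\ 0 < bern_sum_pmf p n (k - 1)).
Proof.
  intros Hp Hk.
  assert (Hpn := Hp n (le_n n)).
  assert (Hb : forall j, 0 <= bern_sum_pmf p n j)
    by (apply bern_sum_pmf_nonneg; intros; apply Hp; lia).
  destruct k as [|k]; cbn [bern_sum_pmf] in Hk.
  - left; pose proof (Hb 0%nat); split; nra.
  - rewrite Nat.sub_succ, Nat.sub_0_r.
    pose proof (Hb k); pose proof (Hb (S k)).
    destruct (Rlt_dec 0 (p n * bern_sum_pmf p n k)) as [Hs | Hs].
    + right; repeat split; [nra | lia | nra].
    + left; split; nra.
Qed.

Lemma bern_sum_pmf_no_internal_zeros (p : nat -> R) (n : nat) :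
  (forall i : nat, (i < n)%nat -> 0 <= p i <= 1) ->
  no_internal_zeros (bern_sum_pmf p n).
Proof.
  induction n as [|n IH]; intros Hp a k c Hakc Ha Hc.
  - destruct c; [lia | cbn in Hc; lra].
  - assert (Hp' : forall i, (i <= n)%nat -> 0 <= p i <= 1)
      by (intros; apply Hp; lia).
    assert (IHn := IH ltac:(intros; apply Hp; lia)).
    assert (Hb : forall j, 0 <= bern_sum_pmf p n j)
      by (apply bern_sum_pmf_nonneg; intros; apply Hp; lia).
    assert (from_failure :
      p n < 1 -> 0 < bern_sum_pmf p n k -> 0 < bern_sum_pmf p (S n) k).
    { intros Hr Hk; pose proof (Hp' n (le_n n)).
      destruct k; cbn [bern_sum_pmf]; [nra |].
      pose proof (Hb k); nra. }
    assert (from_success :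
      0 < p n -> 0 < bern_sum_pmf p n (k - 1) -> 0 < bern_sum_pmf p (S n) k).
    { intros Hr Hk; destruct k as [|k]; [lia |].
      rewrite Nat.sub_succ, Nat.sub_0_r in Hk.
      rewrite bern_sum_pmf_S; pose proof (Hb (S k)); pose proof (Hp' n (le_n n)).
      nra. }
    destruct (bern_sum_pmf_S_pos p n a Hp' Ha) as [[Hr Ha'] | [Hr [Ha1 Ha']]];
    destruct (bern_sum_pmf_S_pos p n c Hp' Hc) as [[Hr' Hc'] | [Hr' [Hc1 Hc']]].
    + apply from_failure; [exact Hr | exact (IHn a k c Hakc Ha' Hc')].
    + apply from_failure; [exact Hr |].
      destruct (Nat.eq_dec k (c - 1)) as [-> | Hne]; [exact Hc' |].
      apply (IHn a k (c - 1)%nat); [lia | exact Ha' | exact Hc'].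
    + apply from_failure; [exact Hr' |].
      apply (IHn (a - 1)%nat k c); [lia | exact Ha' | exact Hc'].
    + apply from_success; [exact Hr |].
      apply (IHn (a - 1)%nat (k - 1)%nat (c - 1)%nat); [lia | exact Ha' | exact Hc'].
Qed.

Definition newton2 (b : nat -> R) (k : nat) : Prop :=
  2 * b k * b (S (S k)) <= b (S k) * b (S k).

(* At the first index it holds for any number of trials and any weights:
   one more trial with weight r maps the gap b1^2 - 2 b0 b2 to
   (1 - r)^2 (b1^2 - 2 b0 b2) + (r b0)^2. *)
Lemma newton2_first (p : nat -> R) (n : nat) : newton2 (bern_sum_pmf p n) 0.
Proof.
  unfold newton2; induction n as [|n IH]; cbn [bern_sum_pmf]; [lra |].
  set (b0 := bern_sum_pmf p n 0) in *.
  set (b1 := bern_sum_pmf p n 1) in *.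
  set (b2 := bern_sum_pmf p n 2) in *.
  assert (gap_step :
    ((1 - p n) * b1 + p n * b0) * ((1 - p n) * b1 + p n * b0)
    - 2 * ((1 - p n) * b0 + 0) * ((1 - p n) * b2 + p n * b1)
    = (1 - p n) ^ 2 * (b1 * b1 - 2 * b0 * b2) + (p n * b0) ^ 2) by ring.
  assert (0 <= (1 - p n) ^ 2 * (b1 * b1 - 2 * b0 * b2))
    by (apply Rmult_le_pos; [apply pow2_ge_0 | lra]).
  pose proof (pow2_ge_0 (p n * b0)); lra.
Qed.

(* For five trials, the middle gap is a sum of squares:
   3 (b2^2 - 2 b1 b3) is the sum of the squares of the 15 terms
   cross q i j k l m, one for each trial i and each way of splitting the other
   four trials into two pairs {j,k} | {l,m}. *)
Definition cross (q : nat -> R) (i j k l m : nat) : R :=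
  (1 - q i) * (q j * q k * (1 - q l) * (1 - q m)
               - (1 - q j) * (1 - q k) * q l * q m).

Lemma newton2_five_middle (q : nat -> R) : newton2 (bern_sum_pmf q 5) 1.
Proof.
  unfold newton2; cbn [bern_sum_pmf].
  set (sos :=
      cross q 0 1 2 3 4 ^ 2 + cross q 0 1 3 2 4 ^ 2 + cross q 0 1 4 2 3 ^ 2
    + cross q 1 0 2 3 4 ^ 2 + cross q 1 0 3 2 4 ^ 2 + cross q 1 0 4 2 3 ^ 2
    + cross q 2 0 1 3 4 ^ 2 + cross q 2 0 3 1 4 ^ 2 + cross q 2 0 4 1 3 ^ 2
    + cross q 3 0 1 2 4 ^ 2 + cross q 3 0 2 1 4 ^ 2 + cross q 3 0 4 1 2 ^ 2
    + cross q 4 0 1 2 3 ^ 2 + cross q 4 0 2 1 3 ^ 2 + cross q 4 0 3 1 2 ^ 2).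
  assert (Hsos : 0 <= sos)
    by (unfold sos; repeat apply Rplus_le_le_0_compat; apply pow2_ge_0).
  match goal with
  | |- ?L <= ?R => assert (E : 3 * (R - L) = sos) by (unfold sos, cross; ring)
  end.
  lra.
Qed.

Lemma newton2_compl (p : nat -> R) (n k : nat) :
  (k + 2 <= n)%nat ->
  newton2 (bern_sum_pmf (fun i => 1 - p i) n) k ->
  newton2 (bern_sum_pmf p n) (n - 2 - k).
Proof.
  unfold newton2; intros Hk H.
  rewrite !bern_sum_pmf_compl in H by lia.
  replace (n - k)%nat with (S (S (n - 2 - k))) in H by lia.
  replace (n - S k)%nat with (S (n - 2 - k)) in H by lia.
  replace (n - S (S k))%nat with (n - 2 - k)%nat in H by lia.
  lra.
Qed.

Lemma newton2_five (q : nat -> R) (k : nat) : newton2 (bern_sum_pmf q 5) k.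
Proof.
  destruct k as [|[|[|[|k]]]].
  - apply newton2_first.
  - apply newton2_five_middle.
  - apply (newton2_compl q 5 1); [lia | apply newton2_five_middle].
  - apply (newton2_compl q 5 0); [lia | apply newton2_first].
  -
    unfold newton2.
    rewrite (bern_sum_pmf_large q 5 (S (S (S (S (S (S k))))))) by lia.
    rewrite Rmult_0_r; apply Rle_0_sqr.
Qed.

Lemma newton2_le5 (p : nat -> R) (n k : nat) :
  (n <= 5)%nat -> newton2 (bern_sum_pmf p n) k.
Proof.
  intros Hn; unfold newton2.
  rewrite <- !(bern_sum_pmf_pad p n 5) by exact Hn.
  apply newton2_five.
Qed.

Section AfterTheMode.

Variable b : nat -> R.
Hypothesis b_nonneg : forall k : nat, 0 <= b k.
Hypothesis b_newton : forall k : nat, newton2 b k.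
Hypothesis b_interval : no_internal_zeros b.
Variable m0 : nat.
Hypothesis b_mode : is_mode b m0.

Lemma nonincreasing_after_mode (k : nat) : (m0 <= k)%nat -> b (S k) <= b k.
Proof.
  induction k as [|k IH]; intros Hk.
  - pose proof (b_mode 1%nat); replace m0 with 0%nat in * by lia; assumption.
  - destruct (Nat.eq_dec m0 (S k)) as [<- | Hne]; [apply b_mode |].
    specialize (IH ltac:(lia)).
    pose proof (b_newton k) as Hn; unfold newton2 in Hn.
    pose proof (b_nonneg (S (S k))).
    destruct (Rle_lt_or_eq_dec 0 (b (S k)) (b_nonneg (S k))) as [Hpos | Hzero].
    + nra.
    + (* b vanishes at k+1 > m0, hence beyond it by the interval property *)
      destruct (Rle_lt_dec (b (S (S k))) 0) as [Hle | Hlt]; [lra |].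
      assert (Hm0 : 0 < b m0) by (pose proof (b_mode (S (S k))); lra).
      pose proof (b_interval m0 (S k) (S (S k)) ltac:(lia) Hm0 Hlt); lra.
Qed.

Lemma halving_after_mode (k : nat) : (m0 <= k)%nat -> 2 * b (S (S k)) <= b k.
Proof.
  intros Hk.
  pose proof (nonincreasing_after_mode k Hk) as H1.
  pose proof (nonincreasing_after_mode (S k) ltac:(lia)) as H2.
  pose proof (b_newton k) as Hn; unfold newton2 in Hn.
  pose proof (b_nonneg (S k)); pose proof (b_nonneg (S (S k))).
  destruct (Rle_lt_or_eq_dec 0 (b k) (b_nonneg k)) as [Hpos | Hzero]; nra.
Qed.

End AfterTheMode.

Lemma poisson1_pmf_pos (i : nat) : 0 < poisson1_pmf i.
Proof.
  unfold poisson1_pmf; apply Rdiv_lt_0_compat; [apply exp_pos |].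
  apply lt_0_INR, lt_O_fact.
Qed.

Lemma poisson1_pmf_decreasing (i : nat) : poisson1_pmf (S i) <= poisson1_pmf i.
Proof.
  unfold poisson1_pmf, Rdiv; apply Rmult_le_compat_l; [left; apply exp_pos |].
  apply Rinv_le_contravar; [apply lt_0_INR, lt_O_fact |].
  apply le_INR; simpl; lia.
Qed.

Definition poisson1_smooth (b : nat -> R) (k : nat) : R :=
  sum_f_R0 (fun j => b j * poisson1_pmf (k - j)) k.

Lemma sum_f_R0_le_last (g : nat -> R) (m : nat) :
  (forall j : nat, (j < m)%nat -> g j <= 0) -> sum_f_R0 g m <= g m.
Proof.
  destruct m as [|m]; intros Hg; cbn [sum_f_R0]; [lra |].
  assert (sum_f_R0 g m <= sum_f_R0 (fun _ => 0) m)
    by (apply sum_Rle; intros; apply Hg; lia).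
  rewrite sum_cte in *; lra.
Qed.

(* Since Pr(Z = 1) = Pr(Z = 0) and Pr(Z = 2) = Pr(Z = 0) / 2, the smoothed
   pmf does not increase from k+1 to k+2 as soon as 2 b(k+2) <= b(k). *)
Lemma poisson1_smooth_step (b : nat -> R) (m : nat) :
  (forall k : nat, 0 <= b k) -> 2 * b (S (S m)) <= b m ->
  poisson1_smooth b (S (S m)) <= poisson1_smooth b (S m).
Proof.
  intros Hb Hhalf; unfold poisson1_smooth; cbn [sum_f_R0].
  rewrite !Nat.sub_diag, Nat.sub_succ_l, Nat.sub_diag by lia.
  set (pi := poisson1_pmf).
  assert (pi1 : pi 1%nat = pi 0%nat) by reflexivity.
  assert (pi2 : pi 2%nat = pi 0%nat / 2)
    by (unfold pi, poisson1_pmf; simpl; field).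
  (* the old terms j <= m lose mass, the term j = m losing b m pi(0) / 2 *)
  assert (old_terms :
    sum_f_R0 (fun j => b j * pi (S (S m) - j)%nat) m
    - sum_f_R0 (fun j => b j * pi (S m - j)%nat) m <= - (b m * pi 0%nat / 2)).
  { rewrite <- minus_sum.
    eapply Rle_trans; [apply sum_f_R0_le_last |].
    - intros j Hj; cbv beta.
      replace (S (S m) - j)%nat with (S (S m - j)) by lia.
      pose proof (poisson1_pmf_decreasing (S m - j)); pose proof (Hb j).
      unfold pi; nra.
    - cbv beta; replace (S (S m) - m)%nat with 2%nat by lia.
      replace (S m - m)%nat with 1%nat by lia.
      rewrite pi1, pi2; lra. }
  assert (pi0 : 0 < pi 0%nat) by apply poisson1_pmf_pos.
  rewrite pi1; nra.
Qed.

Lemma unique_mode_le (f : nat -> R) (s m1 : nat) :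
  (forall k : nat, (s <= k)%nat -> f (S k) <= f k) ->
  is_unique_mode f m1 -> (m1 <= s)%nat.
Proof.
  intros Hdec [Hm1 Huniq].
  destruct (Nat.le_gt_cases m1 s) as [Hle | Hlt]; [exact Hle | exfalso].
  assert (Hdown : forall d, f (s + d)%nat <= f s).
  { induction d as [|d IH]; [rewrite Nat.add_0_r; lra |].
    rewrite Nat.add_succ_r; pose proof (Hdec (s + d)%nat ltac:(lia)); lra. }
  assert (Hs : is_mode f s).
  { intros k; pose proof (Hm1 k); pose proof (Hdown (m1 - s)%nat).
    replace (s + (m1 - s))%nat with m1 in * by lia; lra. }
  specialize (Huniq s Hs); lia.
Qed.

Theorem mainTheorem6 (n : nat) (p : nat -> R) (m0 m1 : nat) :
  (1 <= n <= 5)%nat ->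
  (forall i : nat, (i < n)%nat -> 0 <= p i <= 1) ->
  is_unique_mode (bern_sum_poisson_pmf p n) m1 ->
  is_mode (bern_sum_pmf p n) m0 ->
  (m1 <= m0 + 1)%nat.
Proof.
  intros Hn Hp Hm1 Hm0.
  pose proof (bern_sum_pmf_nonneg p n Hp) as Hb.
  assert (Hhalf : forall k, (m0 <= k)%nat ->
            2 * bern_sum_pmf p n (S (S k)) <= bern_sum_pmf p n k).
  { apply halving_after_mode; [exact Hb | | | exact Hm0].
    - intros k; apply newton2_le5; lia.
    - apply bern_sum_pmf_no_internal_zeros; exact Hp. }
  (* Pr(S + Z = .) is the Poisson smoothing of Pr(S = .), by definition. *)
  apply (unique_mode_le (poisson1_smooth (bern_sum_pmf p n))); [| exact Hm1].
  intros k Hk; destruct k as [|k]; [lia |].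
  apply poisson1_smooth_step; [exact Hb | apply Hhalf; lia].
Qed.
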